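(* Let $n\ge2$, let $T=(n;\sigma,\delta,\tau)$ be a normal tridiagonal Toeplitz matrix with $\sigma\tau\ne0$, and let $\lambda_h=\delta+2\sqrt{\sigma\tau}\cos\frac{h\pi}{n+1}$. Then \[ \kappa_{\mathcal T}(\lambda_h)=\sqrt{\frac1n+\frac2{n-1}\cos^2\frac{h\pi}{n+1}},\qquad h=1,\dots,n. \]
   Context: $T=(n;\sigma,\delta,\tau)$ is the $n\times n$ tridiagonal Toeplitz matrix with diagonal $\delta$, superdiagonal $\tau$, subdiagonal $\sigma$. Its eigenvalue $\lambda_h$ has right eigenvector $x_h$, $x_{h,k}=(\sqrt{\sigma/\tau})^k\sin\frac{hk\pi}{n+1}$, and left eigenvector $y_h$, $y_{h,k}=(\sqrt{\bar\tau/\bar\sigma})^k\sin\frac{hk\pi}{n+1}$. Let $\widetilde x_h,\widetilde y_h$ be their normalizations, $\kappa(\lambda_h)=\|x_h\|_2\|y_h\|_2/|y_h^Hx_h|$, $W_h=\widetilde y_h\widetilde x_h^H$, $\mathcal T$ the subspace of $n\times n$ tridiagonal Toeplitz matrices, $W_h|_{\mathcal T}$ the Frobenius-orthogonal projection of $W_h$ onto $\mathcal T$, and $\kappa_{\mathcal T}(\lambda_h)=\kappa(\lambda_h)\|W_h|_{\mathcal T}\|_F$. *)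

From HB Require Import structures.
From mathcomp Require Import all_boot all_order all_algebra.
From mathcomp Require Import all_classical all_reals all_analysis.
From mathcomp Require Import complex.

Unset Implicit Arguments.
Unset Strict Implicit.
Unset Printing Implicit Defensive.

Import Order.TTheory GRing.Theory Num.Theory.
Local Open Scope ring_scope.
Local Open Scope complex_scope.

Section TTDefs.
Variable R : realType.
Local Notation C := (complex R).

Definition ctr m p (A : 'M[C]_(m, p)) : 'M[C]_(p, m) :=
  \matrix_(i, j) (A j i)^*.
Arguments ctr {m p}.

Definition tridiag_toeplitz (n : nat) (sigma delta tau : C) : 'M[C]_n :=
  \matrix_(i, j)
    if i == j :> nat then delta
    else if (j == i.+1 :> nat) then tau
    else if (i == j.+1 :> nat) then sigma
    else 0.

Definition normal_mx n (A : 'M[C]_n) : Prop := A *m ctr A = ctr A *m A.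

Definition in_TT (n : nat) (M : 'M[C]_n) : Prop :=
  exists a b c : C, M = tridiag_toeplitz n a b c.

Definition frob_dot n (A B : 'M[C]_n) : C :=
  \sum_(i < n) \sum_(j < n) A i j * (B i j)^*.
Arguments frob_dot {n}.
Definition frob_norm n (A : 'M[C]_n) : C :=
  sqrtC (\sum_(i < n) \sum_(j < n) `|A i j| ^+ 2).

Arguments frob_norm {n}.

Definition is_TT_proj n (W P : 'M[C]_n) : Prop :=
  in_TT n P /\ forall M, in_TT n M -> frob_dot (W - P) M = 0.

(* Vectors in C^n, indexed by k = 1..n (ordinal i stands for k = i+1). *)
Definition vnorm n (v : 'I_n -> C) : C := sqrtC (\sum_(i < n) `|v i| ^+ 2).
Arguments vnorm {n}.
Definition vdotH n (y x : 'I_n -> C) : C := \sum_(i < n) (y i)^* * x i.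

Arguments vdotH {n}.

(* s is the chosen square root sqrt(sigma tau); the consistent branches
   are sqrt(sigma/tau) := s / tau and sqrt(conj tau / conj sigma) :=
   conj (tau / s). *)
Definition sinC n (h k : nat) : C :=
  (sin ((h * k)%:R * pi / (n.+1)%:R) : R)%:C.

Definition eig_lambda n (delta s : C) (h : nat) : C :=
  delta + 2%:R * s * (cos (h%:R * pi / (n.+1)%:R) : R)%:C.

Definition right_eigvec n (tau s : C) (h : nat) : 'I_n -> C :=
  fun i => (s / tau) ^+ i.+1 * sinC n h i.+1.
Definition left_eigvec n (tau s : C) (h : nat) : 'I_n -> C :=
  fun i => ((tau / s)^*) ^+ i.+1 * sinC n h i.+1.

Definition kappa n (tau s : C) (h : nat) : C :=
  let x := right_eigvec n tau s h in
  let y := left_eigvec n tau s h in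
  vnorm x * vnorm y / `|vdotH y x|.

Definition W_h n (tau s : C) (h : nat) : 'M[C]_n :=
  let x := right_eigvec n tau s h in
  let y := left_eigvec n tau s h in
  \matrix_(i, j) ((y i / vnorm y) * (x j / vnorm x)^*).

End TTDefs.

Arguments tridiag_toeplitz {R}.
Arguments normal_mx {R n}.
Arguments is_TT_proj {R n}.
Arguments in_TT {R}.
Arguments kappa {R}.
Arguments W_h {R}.
Arguments eig_lambda {R}.
Arguments right_eigvec {R}.
Arguments left_eigvec {R}.
Arguments sinC {R}.
Arguments frob_norm {R n}.
Arguments frob_dot {R n}.
Arguments vnorm {R n}.
Arguments vdotH {R n}.
Arguments ctr {R m p}.

From HB Require Import structures.
From mathcomp Require Import all_boot all_order all_algebra.
From mathcomp Require Import all_classical all_reals all_analysis.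
From mathcomp Require Import complex.
From mathcomp Require Import zify ring.
Import Order.TTheory GRing.Theory Num.Theory.
Local Open Scope complex_scope.
Local Open Scope ring_scope.

(* Normality forces |sigma| = |tau|, so w := s / tau (the paper's
   sqrt(sigma/tau)) is unimodular and the left and right eigenvectors
   coincide: kappa = 1 and W_h = x x^H / |x|^2 with x_k = w^k sin(k theta),
   theta = h pi / (n+1).  The projection onto the tridiagonal Toeplitz
   matrices replaces each of the three bands by its average.  The diagonal of
   W_h sums to 1, and the recurrence
   sin((k-1)theta) + sin((k+1)theta) = 2 cos theta sin(k theta),
   with sin(0) = sin((n+1)theta) = 0, gives
   sum_k sin(k theta) sin((k+1)theta) = cos theta * sum_k sin(k theta)^2,
   so the super- and subdiagonal sum to conj(w) cos theta and w cos theta.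
   Hence |W_h|_T|^2 = n (1/n)^2 + 2 (n-1) (cos theta / (n-1))^2. *)

Lemma sum_consecutive_products {F : numDomainType} (v : nat -> F) (c : F) n :
  v 0%N = 0 -> v n.+1 = 0 -> (forall k, v k + v k.+2 = 2 * c * v k.+1) ->
  \sum_(i < n.-1) v i.+1 * v i.+2 = c * \sum_(i < n) v i.+1 ^+ 2.
Proof.
case: n => [|m] v0 vm rec; first by rewrite !big_ord0 mulr0.
have two_neq0 : (2 : F) != 0 by rewrite pnatr_eq0.
apply: (mulfI two_neq0).
have -> : 2 * \sum_(i < m) v i.+1 * v i.+2 =
          \sum_(i < m.+1) v i.+1 * (v i + v i.+2).
  rewrite (eq_bigr (fun i : 'I_m.+1 => v i.+1 * v i + v i.+1 * v i.+2));
    last by move=> i _; rewrite mulrDr.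
  rewrite big_split big_ord_recl big_ord_recr /= v0 vm !mulr0 add0r addr0.
  rewrite -big_split mulr_sumr; apply: eq_bigr => i _.
  by rewrite /= /bump add1n; ring.
by rewrite mulrA mulr_sumr; apply: eq_bigr => i _; rewrite rec; ring.
Qed.

Section BandSums.
Context {V : zmodType} {n : nat}.
Implicit Types A B : 'M[V]_n.

Definition band_sum (on_band : nat -> nat -> bool) A : V :=
  \sum_(i < n) \sum_(j < n | on_band i j) A i j.

Lemma band_sumB P A B : band_sum P (A - B) = band_sum P A - band_sum P B.
Proof.
rewrite /band_sum -sumrB; apply: eq_bigr => i _.
by rewrite -sumrB; apply: eq_bigr => j _; rewrite !mxE.
Qed.

Lemma band_sum_tr P A : band_sum P A^T = band_sum (fun i j => P j i) A.
Proof.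
rewrite /band_sum (exchange_big_dep xpredT) //=.
by apply: eq_bigr => i _; apply: eq_bigr => j _; rewrite mxE.
Qed.

Lemma band_sum_diag A : band_sum (fun i j => i == j) A = \sum_(i < n) A i i.
Proof.
by apply: eq_bigr => i _; rewrite (big_pred1 i) // => j; rewrite eq_sym.
Qed.

Lemma band_sum_superdiag (f : nat -> nat -> V) A :
    (forall i j : 'I_n, j == i.+1 :> nat -> A i j = f i j) ->
  band_sum (fun i j => j == i.+1) A = \sum_(i < n.-1) f i i.+1.
Proof.
move=> Af; transitivity (\sum_(i < n | (i < n.-1)%N) f i i.+1).
  rewrite big_mkcond; apply: eq_bigr => i _.
  rewrite (eq_bigr (fun j : 'I_n => f i j)) => [|j /Af //].
  by rewrite big_ord1_eq ltn_predRL.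
exact: (big_ord_narrow (leq_pred n)).
Qed.

Lemma band_sum_subdiag (f : nat -> nat -> V) A :
    (forall i j : 'I_n, i == j.+1 :> nat -> A i j = f i j) ->
  band_sum (fun i j => i == j.+1) A = \sum_(i < n.-1) f i.+1 i.
Proof.
move=> Af; rewrite -(band_sum_tr (fun i j => j == i.+1)).
by apply: (band_sum_superdiag (fun i j => f j i)) => i j /Af; rewrite mxE.
Qed.

End BandSums.

Notation diag_sum := (band_sum (fun i j => i == j)).
Notation superdiag_sum := (band_sum (fun i j => j == i.+1)).
Notation subdiag_sum := (band_sum (fun i j => i == j.+1)).

Section TridiagToeplitzProjection.
Context {R : realType} {n : nat}.
Local Notation C := (complex R).
Implicit Types (A W : 'M[C]_n) (a b c : C).

Lemma frob_normE A : frob_norm A = sqrtC (frob_dot A A).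
Proof.
by congr sqrtC; apply: eq_bigr => i _; apply: eq_bigr => j _; rewrite normCK.
Qed.

Lemma frob_dot_tridiag_toeplitz A a b c :
  frob_dot A (tridiag_toeplitz n a b c) =
  diag_sum A * b^* + superdiag_sum A * c^* + subdiag_sum A * a^*.
Proof.
rewrite /frob_dot /band_sum !mulr_suml -!big_split; apply: eq_bigr => i _ /=.
have entry_split j : A i j * (tridiag_toeplitz n a b c i j)^* =
    (if i == j :> nat then A i j * b^* else 0) +
    (if j == i.+1 :> nat then A i j * c^* else 0) +
    (if i == j.+1 :> nat then A i j * a^* else 0).
  rewrite mxE; do 3 case: eqP => ?;
    rewrite ?conjC0 ?mulr0 ?addr0 ?add0r //; lia.
rewrite !mulr_suml (eq_bigr _ (fun j _ => entry_split j)).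
by rewrite !big_split -!big_mkcond.
Qed.

Lemma diag_sum_tridiag_toeplitz a b c :
  diag_sum (tridiag_toeplitz n a b c) = n%:R * b.
Proof.
rewrite band_sum_diag (eq_bigr (fun=> b)) => [|i _]; last by rewrite mxE eqxx.
by rewrite sumr_const card_ord mulr_natl.
Qed.

Lemma superdiag_sum_tridiag_toeplitz a b c :
  superdiag_sum (tridiag_toeplitz n a b c) = n.-1%:R * c.
Proof.
rewrite (band_sum_superdiag (fun _ _ => c)) ?sumr_const ?card_ord ?mulr_natl //.
by move=> i j /eqP ji; rewrite mxE ji eqxx (ltn_eqF (ltnSn i)).
Qed.

Lemma subdiag_sum_tridiag_toeplitz a b c :
  subdiag_sum (tridiag_toeplitz n a b c) = n.-1%:R * a.
Proof.
rewrite (band_sum_subdiag (fun _ _ => a)) ?sumr_const ?card_ord ?mulr_natl //.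
move=> i j /eqP ij; rewrite mxE ij eqxx (gtn_eqF (ltnSn j)).
by rewrite (ltn_eqF (leqW (ltnSn j))).
Qed.

Lemma frob_norm_tridiag_toeplitz a b c :
  frob_norm (tridiag_toeplitz n a b c) =
  sqrtC (n%:R * `|b| ^+ 2 + n.-1%:R * (`|a| ^+ 2 + `|c| ^+ 2)).
Proof.
rewrite frob_normE frob_dot_tridiag_toeplitz diag_sum_tridiag_toeplitz.
rewrite superdiag_sum_tridiag_toeplitz subdiag_sum_tridiag_toeplitz !normCK.
by congr sqrtC; ring.
Qed.

Lemma orthogonal_tridiag_toeplitzP A :
  (forall M, in_TT n M -> frob_dot A M = 0) <->
  [/\ diag_sum A = 0, superdiag_sum A = 0 & subdiag_sum A = 0].
Proof.
split=> [orthA | [d0 u0 l0] _ [a [b [c ->]]]]; last first.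
  by rewrite frob_dot_tridiag_toeplitz d0 u0 l0 !mul0r !addr0.
have TT a b c : in_TT n (tridiag_toeplitz n a b c) by exists a, b, c.
move: (orthA _ (TT 0 1 0)) (orthA _ (TT 0 0 1)) (orthA _ (TT 1 0 0)).
rewrite !frob_dot_tridiag_toeplitz !conjC0 !conjC1 !mulr0 !mulr1.
by rewrite !addr0 !add0r.
Qed.

Definition tt_proj W : 'M[C]_n :=
  tridiag_toeplitz n (subdiag_sum W / n.-1%:R) (diag_sum W / n%:R)
                     (superdiag_sum W / n.-1%:R).

Hypothesis n_ge2 : (1 < n)%N.

Let n_neq0 : n%:R != 0 :> C. Proof. by rewrite pnatr_eq0; lia. Qed.
Let predn_neq0 : n.-1%:R != 0 :> C. Proof. by rewrite pnatr_eq0; lia. Qed.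

Lemma tt_projP W : is_TT_proj W (tt_proj W).
Proof.
split; first by do 3 eexists.
apply/orthogonal_tridiag_toeplitzP; rewrite !(band_sumB _ W).
rewrite diag_sum_tridiag_toeplitz superdiag_sum_tridiag_toeplitz.
rewrite subdiag_sum_tridiag_toeplitz ![_%:R * _]mulrC !divfK //.
by rewrite !subrr.
Qed.

Lemma tt_proj_unique W P : is_TT_proj W P -> P = tt_proj W.
Proof.
move=> [[a [b [c ->]]] /orthogonal_tridiag_toeplitzP[]].
rewrite !(band_sumB _ W) diag_sum_tridiag_toeplitz.
rewrite superdiag_sum_tridiag_toeplitz subdiag_sum_tridiag_toeplitz.
rewrite /tt_proj => /eqP + /eqP + /eqP.
rewrite !subr_eq0 => /eqP-> /eqP-> /eqP->.
by rewrite ![_%:R * _]mulrC !mulfK.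
Qed.

End TridiagToeplitzProjection.

Section NormalizedOuterProduct.
Context {R : realType} {n : nat}.
Local Notation C := (complex R).
Implicit Type x : 'I_n -> C.

Lemma vnorm_ge0 x : 0 <= vnorm x.
Proof. by rewrite sqrtC_ge0 sumr_ge0 // => i _; rewrite exprn_ge0. Qed.

Lemma sqr_vnorm x : vnorm x ^+ 2 = \sum_(i < n) `|x i| ^+ 2.
Proof. exact: sqrtCK. Qed.

Lemma vnorm_neq0 x i : x i != 0 -> vnorm x != 0.
Proof.
apply: contra_neq => x0; apply/eqP; rewrite -normr_eq0 -sqrf_eq0.
have sum0 : \sum_(j < n) `|x j| ^+ 2 = 0 by rewrite -sqr_vnorm x0 expr0n.
by apply/eqP; apply: (psumr_eq0P _ sum0) => // j _; rewrite exprn_ge0.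
Qed.

Lemma vdotH_self x : vdotH x x = vnorm x ^+ 2.
Proof. by rewrite sqr_vnorm; apply: eq_bigr => i _; rewrite normCKC. Qed.

Definition normalized_outer x : 'M[C]_n :=
  \matrix_(i, j) ((x i / vnorm x) * (x j / vnorm x)^*).

Lemma normalized_outerE x i j :
  normalized_outer x i j = x i * (x j)^* / vnorm x ^+ 2.
Proof.
rewrite mxE rmorphM fmorphV /= (geC0_conj (vnorm_ge0 x)).
by rewrite mulrACA -invfM -expr2.
Qed.

Lemma diag_sum_normalized_outer x :
  vnorm x != 0 -> diag_sum (normalized_outer x) = 1.
Proof.
move=> x_neq0; rewrite band_sum_diag.
under eq_bigr do rewrite normalized_outerE -normCK.
by rewrite -mulr_suml -sqr_vnorm divff // expf_neq0.
Qed.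

Lemma superdiag_sum_normalized_outer (x : nat -> C) :
  superdiag_sum (normalized_outer (fun i : 'I_n => x i)) =
  (\sum_(i < n.-1) x i * (x i.+1)^*) / vnorm (fun i : 'I_n => x i) ^+ 2.
Proof.
rewrite mulr_suml.
apply: (band_sum_superdiag (fun i j => x i * (x j)^* / vnorm _ ^+ 2)) => i j _.
exact: normalized_outerE.
Qed.

Lemma subdiag_sum_normalized_outer (x : nat -> C) :
  subdiag_sum (normalized_outer (fun i : 'I_n => x i)) =
  (\sum_(i < n.-1) x i.+1 * (x i)^*) / vnorm (fun i : 'I_n => x i) ^+ 2.
Proof.
rewrite mulr_suml.
apply: (band_sum_subdiag (fun i j => x i * (x j)^* / vnorm _ ^+ 2)) => i j _.
exact: normalized_outerE.
Qed.

End NormalizedOuterProduct.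

Section UnimodularTwist.
Variables (R : realType) (w : complex R) (v : nat -> complex R).
Hypotheses (w_unit : `|w| = 1) (v_real : forall k, (v k)^* = v k).

Definition twist k := w ^+ k.+1 * v k.+1.

Let w_mul_conj : w * w^* = 1.
Proof. by rewrite -normCK w_unit expr1n. Qed.

Lemma sqr_norm_twist k : `|twist k| ^+ 2 = v k.+1 ^+ 2.
Proof.
rewrite normCK rmorphM rmorphXn /= v_real mulrACA -exprMn w_mul_conj.
by rewrite expr1n mul1r.
Qed.

Lemma twist_mul_conj_succ k :
  twist k * (twist k.+1)^* = w^* * (v k.+1 * v k.+2).
Proof.
rewrite /twist rmorphM rmorphXn /= !v_real [w^* ^+ _]exprS.
by rewrite -[RHS]mulr1 -(expr1n _ k.+1) -w_mul_conj exprMn; ring.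
Qed.

Lemma twist_succ_mul_conj k :
  twist k.+1 * (twist k)^* = w * (v k.+1 * v k.+2).
Proof.
rewrite -[LHS]conjCK rmorphM /= conjCK mulrC twist_mul_conj_succ.
by rewrite !rmorphM /= conjCK !v_real.
Qed.

Variables (n : nat) (c : complex R).
Hypotheses (v0 : v 0%N = 0) (v_succn : v n.+1 = 0).
Hypothesis v_rec : forall k, v k + v k.+2 = 2 * c * v k.+1.
Hypothesis twist_neq0 : vnorm (fun i : 'I_n => twist i) != 0.

Let sqr_vnorm_twist :
  vnorm (fun i : 'I_n => twist i) ^+ 2 = \sum_(i < n) v i.+1 ^+ 2.
Proof. by rewrite sqr_vnorm; apply: eq_bigr => i _; rewrite sqr_norm_twist. Qed.

Lemma superdiag_sum_normalized_twist :
  superdiag_sum (normalized_outer (fun i : 'I_n => twist i)) = w^* * c.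
Proof.
rewrite superdiag_sum_normalized_outer.
under eq_bigr do rewrite twist_mul_conj_succ.
rewrite -mulr_sumr (sum_consecutive_products _ _ _ v0 v_succn v_rec) mulrA.
by rewrite -sqr_vnorm_twist mulfK // expf_neq0.
Qed.

Lemma subdiag_sum_normalized_twist :
  subdiag_sum (normalized_outer (fun i : 'I_n => twist i)) = w * c.
Proof.
rewrite subdiag_sum_normalized_outer.
under eq_bigr do rewrite twist_succ_mul_conj.
rewrite -mulr_sumr (sum_consecutive_products _ _ _ v0 v_succn v_rec) mulrA.
by rewrite -sqr_vnorm_twist mulfK // expf_neq0.
Qed.

Lemma frob_norm_tt_proj_normalized_twist : (1 < n)%N ->
  frob_norm (tt_proj (normalized_outer (fun i : 'I_n => twist i))) =
  sqrtC (n%:R^-1 + 2 / n.-1%:R * `|c| ^+ 2).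
Proof.
move=> n_ge2; rewrite frob_norm_tridiag_toeplitz diag_sum_normalized_outer //.
rewrite superdiag_sum_normalized_twist subdiag_sum_normalized_twist.
rewrite !normrM !normfV norm_conjC w_unit !normr_nat normr1 !mul1r.
have n_neq0 : n%:R != 0 :> complex R by rewrite pnatr_eq0; lia.
have predn_neq0 : n.-1%:R != 0 :> complex R by rewrite pnatr_eq0; lia.
by congr sqrtC; field; rewrite predn_neq0 n_neq0.
Qed.

End UnimodularTwist.

Lemma conjC_real_complex {R : realType} (r : R) : (r%:C)^* = r%:C.
Proof. exact: conjc_real. Qed.

Lemma sqrtC_real_complex {R : realType} (r : R) :
  0 <= r -> sqrtC r%:C = (Num.sqrt r)%:C.
Proof.
move=> r_ge0; rewrite -{1}(sqr_sqrtr r_ge0) rmorphXn /= sqrCK //.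
by rewrite ler0c sqrtr_ge0.
Qed.

Section SineSequence.
Context {R : realType}.

Lemma sin_natmul_pi (h : nat) : sin (h%:R * pi) = 0 :> R.
Proof.
elim: h => [|h IH]; first by rewrite mul0r sin0.
by rewrite -natr1 mulrDl mul1r sinDpi IH oppr0.
Qed.

Lemma sin_three_term (t : R) k :
  sin (k%:R * t) + sin (k.+2%:R * t) = 2 * cos t * sin (k.+1%:R * t).
Proof.
have -> : k%:R * t = k.+1%:R * t - t by rewrite -natr1 mulrDl mul1r addrK.
have -> : k.+2%:R * t = k.+1%:R * t + t.
  by rewrite -[k.+2]addn1 natrD mulrDl mul1r.
by rewrite sinB sinD; ring.
Qed.

Variables n h : nat.
Local Notation sinC := (@sinC R).
Let theta : R := h%:R * pi / n.+1%:R.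

Lemma sinCE k : sinC n h k = (sin (k%:R * theta))%:C.
Proof.
rewrite /sinC; suff -> : (h * k)%:R * pi / n.+1%:R = k%:R * theta :> R by [].
by rewrite natrM /theta; ring.
Qed.

Lemma conj_sinC k : (sinC n h k)^* = sinC n h k.
Proof. exact: conjC_real_complex. Qed.

Lemma sinC0 : sinC n h 0 = 0.
Proof. by rewrite sinCE mul0r sin0. Qed.

Lemma sinC_succn : sinC n h n.+1 = 0.
Proof.
by rewrite sinCE /theta mulrCA divff ?pnatr_eq0 // mulr1 sin_natmul_pi.
Qed.

Lemma sinC1_neq0 : (0 < h <= n)%N -> sinC n h 1 != 0.
Proof.
move=> /andP[h_gt0 h_le_n]; rewrite sinCE mul1r eq_complex negb_and /=.
rewrite gt_eqF // sin_gt0_pi // divr_gt0 ?mulr_gt0 ?ltr0n ?pi_gt0 //=.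
by rewrite ltr_pdivrMr ?ltr0n // mulrC ltr_pM2l ?pi_gt0 // ltr_nat ltnS.
Qed.

Lemma sinC_three_term k :
  sinC n h k + sinC n h k.+2 = 2 * (cos theta)%:C * sinC n h k.+1.
Proof. by rewrite !sinCE -rmorphD sin_three_term !rmorphM /= rmorph_nat. Qed.

End SineSequence.

Section Eigenvectors.
Context {R : realType}.
Local Notation C := (complex R).

Lemma normal_tridiag_toeplitz_norm_eq {n} {sigma delta tau : C} :
    (1 < n)%N -> normal_mx (tridiag_toeplitz n sigma delta tau) ->
  `|sigma| = `|tau|.
Proof.
case: n => [|[|m]] // _ /(congr1 (fun M : 'M[C]_m.+2 => M ord0 ord0)).
(* The (0, 0) entries read |delta|^2 + |tau|^2 = |delta|^2 + |sigma|^2. *)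
rewrite /ctr !mxE !big_ord_recl !big1 => [|i _|i _].
all: rewrite ?mxE //= ?mulr0 ?mul0r //.
rewrite !addr0 -!normCK -!normCKC => /addrI /eqP.
by rewrite eqrXn2 // => /eqP.
Qed.

Lemma norm_div_sqrt_eq1 (sigma tau s : C) :
  tau != 0 -> `|sigma| = `|tau| -> s ^+ 2 = sigma * tau -> `|s / tau| = 1.
Proof.
move=> tau_neq0 sigma_tau s2; have norm_s : `|s| = `|tau|.
  by apply/eqP; rewrite -(eqrXn2 (_ : 0 < 2)%N) // -normrX s2 normrM sigma_tau.
by rewrite normrM normfV norm_s divff // normr_eq0.
Qed.

Lemma left_eigvec_eq_right n {tau s : C} h :
  `|s / tau| = 1 -> left_eigvec n tau s h = right_eigvec n tau s h.
Proof.
move=> w_unit; have w_inv : (s / tau)^-1 = (s / tau)^*.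
  by rewrite invC_norm w_unit expr1n invr1 mul1r.
by rewrite /left_eigvec -invf_div w_inv conjCK.
Qed.

Lemma kappa_eq1 n (tau s : C) h :
    left_eigvec n tau s h = right_eigvec n tau s h ->
    vnorm (right_eigvec n tau s h) != 0 ->
  kappa n tau s h = 1.
Proof.
rewrite /kappa => -> x_neq0.
rewrite vdotH_self ger0_norm ?exprn_ge0 ?vnorm_ge0 //.
by rewrite -expr2 divff ?expf_neq0.
Qed.

Context {n : nat} {tau s : C} {h : nat}.
Hypotheses (n_ge2 : (1 < n)%N) (h_range : (0 < h <= n)%N).
Hypothesis w_unit : `|s / tau| = 1.

Lemma vnorm_right_eigvec_neq0 : vnorm (right_eigvec n tau s h) != 0.
Proof.
apply: (@vnorm_neq0 _ _ _ (Ordinal (ltnW n_ge2))).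
by rewrite mulf_neq0 ?sinC1_neq0 // expf_neq0 // -normr_eq0 w_unit oner_neq0.
Qed.

Lemma frob_norm_tt_proj_right_eigvec :
  frob_norm (tt_proj (normalized_outer (right_eigvec n tau s h))) =
  (Num.sqrt (n%:R^-1 + 2 / n.-1%:R * cos (h%:R * pi / n.+1%:R) ^+ 2))%:C.
Proof.
(* right_eigvec n tau s h is by definition the twist of sinC n h by s / tau. *)
have norm_eq := frob_norm_tt_proj_normalized_twist _ _ _ w_unit
  (conj_sinC n h) _ _ (sinC0 n h) (sinC_succn n h) (sinC_three_term n h)
  vnorm_right_eigvec_neq0 n_ge2.
apply: (etrans norm_eq); rewrite -sqrtC_real_complex; last first.
  by rewrite addr_ge0 ?invr_ge0 ?ler0n // mulr_ge0 ?sqr_ge0 // divr_ge0 ?ler0n.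
rewrite normCK conjC_real_complex -expr2.
by rewrite !(rmorphD, rmorphM, fmorphV, rmorphXn, rmorph_nat).
Qed.

End Eigenvectors.

Theorem corollary3 (R : realType) (n : nat) (sigma delta tau s : complex R) :
  (2 <= n)%N ->
  sigma * tau != 0 ->
  normal_mx (tridiag_toeplitz n sigma delta tau) ->
  s ^+ 2 = sigma * tau ->
  forall h : nat, (1 <= h <= n)%N ->
    (exists P, is_TT_proj (W_h n tau s h) P) /\
    (forall P, is_TT_proj (W_h n tau s h) P ->
       kappa n tau s h * frob_norm P =
       (Num.sqrt (n%:R^-1 + 2%:R / (n.-1)%:R
                   * cos (h%:R * pi / (n.+1)%:R) ^+ 2) : R)%:C).
Proof.
move=> n_ge2 sigma_tau_neq0 normalT s2 h h_range.
have tau_neq0 : tau != 0.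
  by move: sigma_tau_neq0; rewrite mulf_eq0 negb_or => /andP[].
have w_unit : `|s / tau| = 1.
  apply: norm_div_sqrt_eq1 tau_neq0 _ s2.
  exact: normal_tridiag_toeplitz_norm_eq n_ge2 normalT.
have left_right := left_eigvec_eq_right n h w_unit.
have x_neq0 := vnorm_right_eigvec_neq0 n_ge2 h_range w_unit.
split=> [|P /(tt_proj_unique n_ge2)->].
  by exists (tt_proj (W_h n tau s h)); exact: tt_projP.
rewrite kappa_eq1 // mul1r.
rewrite -(frob_norm_tt_proj_right_eigvec n_ge2 h_range w_unit).
by rewrite /W_h left_right.
Qed.
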